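(* Let $T=\omega^{<\omega}$ be the tree of all finite sequences of natural numbers ordered by end-extension $\sqsubseteq$. There is a colouring $c:T\to\omega$ such that for every strong subtree $T'$ of $T$ of infinite height, $c[T']=\omega$.
   Context: For a tree $T$, the level of $t$ is the number of its strict predecessors; the tree is balanced if it has infinite height and no maximal nodes, or all maximal nodes lie at the top level. A subtree is a subset with the induced order in which meets agree with those of $T$. A strong subtree $S$ of $T$ is either empty or a rooted balanced subtree such that every level of $S$ is contained in a single level of $T$ and, for every non-maximal $s\in S$ and every immediate successor $t$ of $s$ in $T$, exactly one immediate successor of $s$ in $S$ lies above (or equals) $t$. *)

From mathcomp Require Import all_boot.
From mathcomp Require Import boolp classical_sets.
Set Implicit Arguments. Unset Strict Implicit. Unset Printing Implicit Defensive.

Definition le_T (s t : seq nat) : Prop := prefix s t.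
Definition lt_T (s t : seq nat) : Prop := prefix s t /\ s <> t.

Fixpoint meetT (s t : seq nat) : seq nat :=
  match s, t with
  | x :: s', y :: t' => if x == y then x :: meetT s' t' else [::]
  | _, _ => [::]
  end.


(* Level of s in S = number of strict predecessors of s lying in S
   (strict predecessors of s in T are exactly take i s, i < size s). *)
Definition levelS (S : set (seq nat)) (s : seq nat) : nat :=
  count (fun i => `[< S (take i s) >]) (iota 0 (size s)).

Definition levelT (s : seq nat) : nat := size s.

Definition maximalS (S : set (seq nat)) (s : seq nat) : Prop :=
  S s /\ ~ (exists u, S u /\ lt_T s u).

Definition infinite_height (S : set (seq nat)) : Prop :=
  forall n, exists s, S s /\ n <= levelS S s.

Definition balanced (S : set (seq nat)) : Prop :=
  (infinite_height S /\ forall s, ~ maximalS S s)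
  \/ (exists n, (exists s, S s /\ levelS S s = n)
                /\ (forall s, S s -> levelS S s <= n)
                /\ (forall s, maximalS S s -> levelS S s = n)).

(* Subtree: meets computed in S agree with those of T, i.e. for s, t in S the
   T-meet belongs to S and is the greatest lower bound of s, t in S. *)
Definition subtree (S : set (seq nat)) : Prop :=
  forall s t, S s -> S t ->
    [/\ S (meetT s t), le_T (meetT s t) s, le_T (meetT s t) t
      & forall u, S u -> le_T u s -> le_T u t -> le_T u (meetT s t)].

Definition rooted (S : set (seq nat)) : Prop :=
  exists r, S r /\ forall s, S s -> le_T r s.

Definition imm_succS (S : set (seq nat)) (s u : seq nat) : Prop :=
  S u /\ lt_T s u /\ ~ (exists v, S v /\ lt_T s v /\ lt_T v u).

(* Strong subtree. Immediate successors of s in T are rcons s n. *)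
Definition strong_subtree (S : set (seq nat)) : Prop :=
  S = set0 \/
  [/\ rooted S, balanced S, subtree S,
      (forall s t, S s -> S t -> levelS S s = levelS S t -> levelT s = levelT t)
    & (forall s, S s -> ~ maximalS S s ->
         forall n : nat, exists! u, imm_succS S s u /\ le_T (rcons s n) u)].

From mathcomp Require Import all_boot.
From mathcomp Require Import boolp classical_sets.
From mathcomp Require Import zify.

Set Implicit Arguments. Unset Strict Implicit. Unset Printing Implicit Defensive.

(* Code every natural number x as a pair [decode x = (n, k)]
   (via the countable bijection [pickle] on nat * nat).  The colour of a node
   t of length |t| is read off the first entry x of t with (decode x).1 = |t|:
   it is (decode x).2.  A node thus "announces" in advance, by an entry coding
   (n, k), that its extensions of length n get colour k.

   Let S be a strong subtree of infinite height with root r, and fix a colour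
   k.  Such an S has no maximal node, and every node of S has, above each
   immediate T-successor, an S-successor one S-level higher.  Let B bound the
   first components of the codes occurring in r.  Go up B+1 S-levels from r
   through the successor above [rcons r 0], reaching u; then go up B+1
   S-levels through the successor above [rcons r (pickle (|u|, k))], reaching
   v.  Since S-levels of a strong subtree lie in single T-levels, |v| = |u| > B,
   so no entry of r codes a pair with first component |v|, and the entry
   right after r gives colour v = k. *)

Definition decode (x : nat) : nat * nat := odflt (0, 0) (unpickle x).

Definition colour (t : seq nat) : nat :=
  (decode (nth 0 t (find (fun x => (decode x).1 == size t) t))).2.

Lemma decode_pickle (p : nat * nat) : decode (pickle p) = p.
Proof. by rewrite /decode pickleK. Qed.

Lemma colour_announced (r w : seq nat) (n k : nat) :
  size (r ++ pickle (n, k) :: w) = n ->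
  all (fun x => (decode x).1 != n) r ->
  colour (r ++ pickle (n, k) :: w) = k.
Proof.
move=> size_t no_earlier; rewrite /colour size_t find_cat.
have -> : has (fun x => (decode x).1 == n) r = false.
  by apply/negbTE/hasPn => x /(allP no_earlier).
rewrite /= decode_pickle eqxx addn0.
by rewrite nth_cat ltnn subnn /= decode_pickle.
Qed.

Lemma lt_T_size (v w : seq nat) : lt_T v w -> size v < size w.
Proof.
case=> /prefixP [x ->] neq; rewrite size_cat.
case: x neq => [|a x] neq; first by rewrite cats0 in neq.
by rewrite /= addnS ltnS leq_addr.
Qed.

Lemma take_strictly_between (s w : seq nat) (i : nat) :
  size s < i < size (s ++ w) ->
  lt_T s (take i (s ++ w)) /\ lt_T (take i (s ++ w)) (s ++ w).
Proof.
case/andP=> lo hi; have size_i : size (take i (s ++ w)) = i by rewrite size_take hi.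
split; split.
- by rewrite take_cat ltnNge ltnW //= prefix_prefix.
- by move=> /(f_equal size); rewrite size_i => eq_i; rewrite eq_i ltnn in lo.
- exact: prefix_take.
- by move=> /(f_equal size); rewrite size_i => eq_i; rewrite eq_i ltnn in hi.
Qed.

(* An immediate S-successor u of a node s of S lies exactly one S-level above
   s: among the strict prefixes of u, those in S are those of s, and s. *)
Lemma levelS_imm_succ (S : set (seq nat)) (s u : seq nat) :
  imm_succS S s u -> S s -> levelS S u = (levelS S s).+1.
Proof.
case=> _ [[/prefixP [w ->] neq] nothing_between] Ss.
case: w neq nothing_between => [|x w] neq nothing_between; first by rewrite cats0 in neq.
rewrite /levelS size_cat iotaD count_cat add0n /= take_cat ltnn subnn take0 cats0.
have below_s : count (fun i => `[< S (take i (s ++ x :: w)) >]) (iota 0 (size s))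
               = count (fun i => `[< S (take i s) >]) (iota 0 (size s)).
  apply: eq_in_count => i; rewrite mem_iota add0n => /andP [_ lt_i].
  by rewrite take_cat lt_i.
have above_s : count (fun i => `[< S (take i (s ++ x :: w)) >])
                 (iota (size s).+1 (size w)) = 0.
  apply/eqP; rewrite -leqn0 leqNgt -has_count; apply/hasP => -[i].
  rewrite mem_iota => /andP [lo hi] /asboolP S_i; apply: nothing_between.
  exists (take i (s ++ x :: w)); split => //; apply: take_strictly_between.
  by rewrite lo size_cat /= -addSnnS.
have -> : `[< S s >] = true by apply/asboolP.
by rewrite below_s above_s addn0 addn1.
Qed.

(* A balanced tree of infinite height has no maximal node: otherwise all its
   maximal nodes, hence all its nodes, would sit at or below a top level. *)
Lemma balanced_no_maximal (S : set (seq nat)) :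
  balanced S -> infinite_height S -> forall s, ~ maximalS S s.
Proof.
case=> [[_ no_max] _ //|[n [_ [below_n _]]]] high s _.
by have [t [St deep]] := high n.+1; have := below_n t St; lia.
Qed.

Section Ascent.

Variable S : set (seq nat).
Hypothesis S_succ : forall s, S s -> forall n : nat,
  exists u, imm_succS S s u /\ le_T (rcons s n) u.

Lemma ascent (s : seq nat) (n m : nat) : S s ->
  exists v, [/\ S v, levelS S v = levelS S s + m.+1,
                le_T (rcons s n) v & size s + m.+1 <= size v].
Proof.
move=> Ss; elim: m => [|m [v [Sv level_v s_n_v size_v]]].
  have [u [succ_u s_n_u]] := S_succ Ss n.
  exists u; split => //; first exact: succ_u.1.
    by rewrite (levelS_imm_succ succ_u Ss) addn1.
  by have := size_prefix s_n_u; rewrite size_rcons addn1.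
have [u [succ_u _]] := S_succ Sv 0.
have [Su [v_u _]] := succ_u.
exists u; split => //.
- by rewrite (levelS_imm_succ succ_u Sv) level_v !addnS.
- exact: prefix_trans s_n_v v_u.1.
- by have := lt_T_size v_u; lia.
Qed.

End Ascent.

Theorem proposition6p4 :
  exists c : seq nat -> nat,
    forall S : set (seq nat), strong_subtree S -> infinite_height S ->
      forall k : nat, exists s, S s /\ c s = k.
Proof.
exists colour => S strong high k.
case: strong => [S0|[[r [Sr _]] bal _ level_length succ]].
  by have [s [Ss _]] := high 0; rewrite S0 in Ss.
have no_max := balanced_no_maximal bal high.
have climb : forall s, S s -> forall n : nat,
    exists u, imm_succS S s u /\ le_T (rcons s n) u.
  by move=> s Ss n; have [u [? _]] := succ s Ss (no_max s) n; exists u.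
(* B bounds the lengths announced by the entries of the root. *)
pose B := \max_(x <- r) (decode x).1.
have [u [Su level_u _ size_u]] := ascent climb 0 B Sr.
have [v [Sv level_v r_v _]] := ascent climb (pickle (size u, k)) B Sr.
have size_v : size v = size u by apply: level_length; rewrite ?level_v ?level_u.
exists v; split => //.
have [w v_eq] := prefixP r_v; rewrite v_eq cat_rcons in size_v *.
apply: colour_announced => //.
apply/allP => x x_r; rewrite neq_ltn; apply/orP; left.
have le_B : (decode x).1 <= B := @leq_bigmax_seq _ r xpredT (fun y => (decode y).1) x x_r isT.
by apply: leq_ltn_trans le_B _; lia.
Qed.
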